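(* Let $F$ be a smooth regular distribution supported on $[0,1]$. Then $\tilde{O}(\epsilon^{-1/2})$ oracle queries to $F$ and $f$ suffice to learn $F$ within Lévy distance $O(\epsilon)$.
   Context: A distribution is smooth if it has no point masses and its PDF $f$ is $C^1$; it is regular iff $f'(v)(1-F(v))\ge-2f(v)^2$ for all $v$ (equivalently $qF^{-1}(1-q)$ concave). Oracle query model: an algorithm adaptively chooses points $x$ and receives the exact values $F(x)$ and/or $f(x)$; afterwards it outputs a distribution $\hat F$, which must satisfy the accuracy guarantee in Lévy distance $\mathrm{L\acute{e}vy}(F,G)=\inf\{\epsilon: F(v-\epsilon)-\epsilon\le G(v)\le F(v+\epsilon)+\epsilon\ \forall v\}$. $\tilde{O}$ hides polylog$(1/\epsilon)$ factors. *)

From Stdlib Require Import Reals List.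
From Coquelicot Require Import Coquelicot.
Open Scope R_scope.

(* A smooth regular distribution supported on [0,1], given by its CDF F and
   its density f (the pointwise values the oracle returns).
   - f vanishes outside [0,1], is nonnegative;
   - F is the integral of f (so F is continuous: no point masses), total mass 1;
   - f is C^1 on [0,1]: it agrees on [0,1] with a C^1 function g on R
     (derivative g', one-sided at the endpoints);
   - regularity: f'(v)(1 - F(v)) >= -2 f(v)^2 on [0,1]
     (outside [0,1], f = f' = 0 and the condition is trivial). *)
Definition smooth_regular01 (F f : R -> R) : Prop :=
  (forall x, (x < 0 \/ 1 < x) -> f x = 0) /\
  (forall x, 0 <= f x) /\
  (forall x, x < 0 -> F x = 0) /\
  (forall x, 0 <= x <= 1 -> F x = RInt f 0 x) /\
  (forall x, 1 <= x -> F x = 1) /\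
  RInt f 0 1 = 1 /\
  exists g g' : R -> R,
    (forall x, is_derive g x (g' x)) /\
    (forall x, continuous g' x) /\
    (forall x, 0 <= x <= 1 -> g x = f x) /\
    (forall v, 0 <= v <= 1 -> g' v * (1 - F v) >= -2 * (f v) ^ 2).

Definition is_cdf (G : R -> R) : Prop :=
  (forall x y, x <= y -> G x <= G y) /\
  (forall x, filterlim G (at_right x) (locally (G x))) /\
  is_lim G m_infty 0 /\
  is_lim G p_infty 1.

Definition levy_close (F G : R -> R) (e : R) : Prop :=
  forall v, F (v - e) - e <= G v /\ G v <= F (v + e) + e.

Definition levy_dist (F G : R -> R) : Rbar :=
  Glb_Rbar (levy_close F G).

(* Adaptive oracle algorithm: a query strategy maps the transcript so far
   (list of (x, F x, f x)) to the next query point; after n queries an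
   output map turns the transcript into a distribution (CDF). *)
Fixpoint transcript (query : list (R * R * R) -> R) (F f : R -> R) (n : nat)
  : list (R * R * R) :=
  match n with
  | O => nil
  | S m => let h := transcript query F f m in
           let x := query h in
           h ++ ((x, F x, f x) :: nil)
  end.

(* Fix N ~ eps^(-1/2), r = 1 + 1/N and B ~ 2 log(1/eps).  For each
   test in a list of O(N B) monotone tests on the oracle answer (x, F x, f x),
   locate the point where the test switches from false to true by B steps of
   bisection.  Output the piecewise-linear interpolation of F through all
   queried points of [0,1].  The tests are thresholds on F (at i/N and at
   1 - r^-j) and on the hazard-type ratio f/(1-F)^2 (at eps r^j).

   Regularity is equivalent to f/(1-F)^2 = (1/(1-F))' being
   nondecreasing (hazard_mono), so every test is monotone.  Bisection then
   guarantees that no output cell longer than 2^-B is separated by a test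
   (cell_unseparated).  On such a cell, 1 - F and f/(1-F)^2 vary by a factor
   at most r and the mass is at most 1/N; hence the density varies by a factor
   at most r^3 and the chord interpolates F with error (r^3-1)/N^2 = O(eps)
   (cell_accuracy).  Cells that are short, light, or in the upper eps-tail
   satisfy the Lévy condition trivially (levy_on_cell). *)

From Stdlib Require Import Reals List Lra Lia ZArith.
From Coquelicot Require Import Coquelicot.
Open Scope R_scope.

Record regular_density (F f g g' : R -> R) : Prop := {
  density_nonneg : forall x, 0 <= f x;
  cdf_left : forall x, x < 0 -> F x = 0;
  cdf_integral : forall x, 0 <= x <= 1 -> F x = RInt f 0 x;
  cdf_right : forall x, 1 <= x -> F x = 1;
  extension_derive : forall x, is_derive g x (g' x);
  extension_agrees : forall x, 0 <= x <= 1 -> g x = f x;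
  regularity : forall v, 0 <= v <= 1 -> g' v * (1 - F v) >= -2 * (f v) ^ 2 }.

Lemma regular_density_of F f :
  smooth_regular01 F f -> exists g g', regular_density F f g g'.
Proof.
  intros (_ & Hnn & Hl & Hint & Hr & _ & g & g' & Hd & _ & Hag & Hreg).
  exists g, g'. split; assumption.
Qed.

(* The ratio f/(1-F)^2, the derivative of 1/(1-F). *)
Definition hazard (F f : R -> R) (x : R) : R := f x / (1 - F x) ^ 2.

Definition chord (F : R -> R) (a b v : R) : R := F a + (v - a) / (b - a) * (F b - F a).

Lemma chord_mono F a b v w : a < b -> F a <= F b -> v <= w -> chord F a b v <= chord F a b w.
Proof.
  intros Hab HF Hvw. unfold chord.
  assert (E : (w - a) / (b - a) - (v - a) / (b - a) = (w - v) / (b - a)) by (field; lra).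
  assert (0 <= (w - v) / (b - a)) by (apply Rmult_le_pos; [|left; apply Rinv_0_lt_compat]; lra).
  nra.
Qed.

Lemma chord_between F a b v : a <= v <= b -> a < b -> F a <= F b ->
  F a <= chord F a b v <= F b.
Proof.
  intros Hv Hab HF.
  assert (Ea : chord F a b a = F a) by (unfold chord; field; lra).
  assert (Eb : chord F a b b = F b) by (unfold chord; field; lra).
  pose proof (chord_mono F a b a v Hab HF ltac:(lra)).
  pose proof (chord_mono F a b v b Hab HF ltac:(lra)). lra.
Qed.

Section RegularDistribution.

Variables F f g g' : R -> R.
Hypothesis HF : regular_density F f g g'.

Lemma extension_continuous x : continuous g x.
Proof.
  apply (@ex_derive_continuous R_AbsRing R_NormedModule).
  exists (g' x). apply (extension_derive _ _ _ _ HF).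
Qed.

Lemma extension_integrable a b : ex_RInt g a b.
Proof.
  apply (@ex_RInt_continuous R_CompleteNormedModule).
  intros x _. apply extension_continuous.
Qed.

Lemma cdf_as_integral x : 0 <= x <= 1 -> F x = RInt g 0 x.
Proof.
  intros Hx. rewrite (cdf_integral _ _ _ _ HF x Hx). apply RInt_ext.
  intros t Ht. rewrite Rmin_left, Rmax_right in Ht by lra.
  symmetry. apply (extension_agrees _ _ _ _ HF). lra.
Qed.

Lemma cdf_increment x y : 0 <= x -> x <= y -> y <= 1 -> F y - F x = RInt g x y.
Proof.
  intros Hx Hxy Hy. rewrite !cdf_as_integral by lra.
  rewrite <- (RInt_Chasles g 0 x y) by apply extension_integrable.
  unfold plus; simpl. ring.
Qed.

Lemma cdf_increment_lower x y m : 0 <= x -> x <= y -> y <= 1 ->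
  (forall t, x < t < y -> m <= g t) -> m * (y - x) <= F y - F x.
Proof.
  intros Hx Hxy Hy Hm. rewrite cdf_increment by lra.
  replace (m * (y - x)) with (RInt (fun _ => m) x y)
    by (rewrite RInt_const; unfold scal; simpl; unfold mult; simpl; ring).
  apply RInt_le; auto using ex_RInt_const, extension_integrable.
Qed.

Lemma cdf_increment_upper x y M : 0 <= x -> x <= y -> y <= 1 ->
  (forall t, x < t < y -> g t <= M) -> F y - F x <= M * (y - x).
Proof.
  intros Hx Hxy Hy HM. rewrite cdf_increment by lra.
  replace (M * (y - x)) with (RInt (fun _ => M) x y)
    by (rewrite RInt_const; unfold scal; simpl; unfold mult; simpl; ring).
  apply RInt_le; auto using ex_RInt_const, extension_integrable.
Qed.

Lemma cdf_at_0 : F 0 = 0.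
Proof. rewrite cdf_as_integral by lra. apply (@RInt_point R_CompleteNormedModule). Qed.

Lemma cdf_at_1 : F 1 = 1.
Proof. apply (cdf_right _ _ _ _ HF). lra. Qed.

Lemma cdf_mono01 x y : 0 <= x -> x <= y -> y <= 1 -> F x <= F y.
Proof.
  intros Hx Hxy Hy.
  enough (0 * (y - x) <= F y - F x) by lra.
  apply cdf_increment_lower; auto.
  intros t Ht. rewrite (extension_agrees _ _ _ _ HF) by lra.
  apply (density_nonneg _ _ _ _ HF).
Qed.

Lemma cdf_clamp x : F x = F (Rmax 0 (Rmin 1 x)).
Proof.
  unfold Rmin, Rmax. destruct (Rle_dec 1 x); destruct (Rle_dec 0 _).
  - rewrite !(cdf_right _ _ _ _ HF); lra.
  - lra.
  - reflexivity.
  - rewrite (cdf_left _ _ _ _ HF), cdf_at_0 by lra. reflexivity.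
Qed.

Lemma cdf_mono x y : x <= y -> F x <= F y.
Proof.
  intros Hxy. rewrite (cdf_clamp x), (cdf_clamp y).
  apply cdf_mono01; unfold Rmin, Rmax; repeat destruct Rle_dec; lra.
Qed.

Lemma cdf_range x : 0 <= F x <= 1.
Proof.
  rewrite <- cdf_at_0, <- cdf_at_1 at 1. rewrite (cdf_clamp x).
  split; apply cdf_mono01; unfold Rmin, Rmax; repeat destruct Rle_dec; lra.
Qed.

(* Regularity makes the hazard ratio nondecreasing: the derivative of
   g/(1-F)^2 is (1-F)(g'(1-F) + 2 g^2)/(1-F)^4 >= 0. *)
Lemma hazard_mono x y : 0 <= x -> x <= y -> y <= 1 -> F y < 1 ->
  hazard F f x <= hazard F f y.
Proof.
  intros Hx Hxy Hy HFy.
  set (G := fun s => RInt g 0 s).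
  set (psi := fun t => g t / (1 - G t) ^ 2).
  set (dpsi := fun t => (g' t * (1 - G t) ^ 2 - g t * (INR 2 * (0 - g t) * (1 - G t) ^ 1))
                        / ((1 - G t) ^ 2) ^ 2).
  assert (HG : forall t, 0 <= t <= 1 -> F t = G t) by (intros; apply cdf_as_integral; auto).
  assert (Hpos : forall t, x <= t <= y -> 0 < 1 - G t).
  { intros t Ht. rewrite <- HG by lra. pose proof (cdf_mono t y). lra. }
  assert (HGd : forall t, is_derive G t (g t)).
  { intros t. apply (@is_derive_RInt R_NormedModule g G 0 t).
    - apply filter_forall. intros b. apply (@RInt_correct R_CompleteNormedModule).
      apply extension_integrable.
    - apply extension_continuous. }
  assert (Hder : forall t, x <= t <= y -> is_derive psi t (dpsi t)).
  { intros t Ht. apply is_derive_div.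
    - apply (extension_derive _ _ _ _ HF).
    - apply (is_derive_pow (fun s => 1 - G s) 2 t).
      apply (@is_derive_minus R_AbsRing R_NormedModule);
        [apply (@is_derive_const R_AbsRing R_NormedModule) | apply HGd].
    - apply pow_nonzero. specialize (Hpos t Ht). lra. }
  assert (Hdpos : forall t, x <= t <= y -> 0 <= dpsi t).
  { intros t Ht. specialize (Hpos t Ht).
    pose proof (regularity _ _ _ _ HF t ltac:(lra)) as Hreg.
    rewrite HG, <- (extension_agrees _ _ _ _ HF) in Hreg by lra.
    unfold dpsi. change (INR 2) with 2.
    replace (g' t * (1 - G t) ^ 2 - g t * (2 * (0 - g t) * (1 - G t) ^ 1))
      with ((1 - G t) * (g' t * (1 - G t) + 2 * g t ^ 2)) by ring.
    apply Rmult_le_pos; [apply Rmult_le_pos; lra|].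
    left. apply Rinv_0_lt_compat. apply pow_lt. apply pow_lt. lra. }
  destruct (MVT_gen psi x y dpsi) as [c [Hc Hmvt]].
  - intros t Ht. rewrite Rmin_left, Rmax_right in Ht by lra. apply Hder; lra.
  - intros t Ht. rewrite Rmin_left, Rmax_right in Ht by lra.
    apply continuity_pt_filterlim. apply (@ex_derive_continuous R_AbsRing R_NormedModule).
    exists (dpsi t). apply Hder; lra.
  - rewrite Rmin_left, Rmax_right in Hc by lra.
    assert (0 <= dpsi c * (y - x)) by (apply Rmult_le_pos; [apply Hdpos|]; lra).
    unfold hazard. rewrite <- !(extension_agrees _ _ _ _ HF), !HG by lra.
    unfold psi in Hmvt. lra.
Qed.

Lemma density_as_hazard t : 0 <= t <= 1 -> F t < 1 -> g t = hazard F f t * (1 - F t) ^ 2.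
Proof.
  intros Ht HFt. rewrite (extension_agrees _ _ _ _ HF) by auto. unfold hazard. field. lra.
Qed.

Lemma density_hazard_bounds a b t : 0 <= a -> a <= t -> t <= b -> b <= 1 -> F b < 1 ->
  hazard F f a * (1 - F b) ^ 2 <= g t <= hazard F f b * (1 - F a) ^ 2.
Proof.
  intros Ha Hat Htb Hb HFb.
  pose proof (cdf_mono a t Hat). pose proof (cdf_mono t b Htb).
  pose proof (hazard_mono a t Ha Hat ltac:(lra) ltac:(lra)).
  pose proof (hazard_mono t b ltac:(lra) Htb Hb HFb).
  assert (0 <= hazard F f a).
  { unfold hazard. apply Rmult_le_pos; [apply (density_nonneg _ _ _ _ HF)|].
    left. apply Rinv_0_lt_compat. apply pow_lt. lra. }
  assert ((1 - F b) ^ 2 <= (1 - F t) ^ 2) by (apply pow_incr; lra).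
  assert ((1 - F t) ^ 2 <= (1 - F a) ^ 2) by (apply pow_incr; lra).
  assert (0 <= (1 - F b) ^ 2) by (apply pow_le; lra).
  rewrite density_as_hazard by lra. split; apply Rmult_le_compat; lra.
Qed.

Lemma chord_error a v b m M : 0 <= a -> a <= v -> v <= b -> b <= 1 -> a < b ->
  (forall t, a < t < b -> m <= g t <= M) ->
  Rabs (chord F a b v - F v) <= (M - m) * (b - a).
Proof.
  intros Ha Hav Hvb Hb Hab Hg.
  assert (Hmv : m * (v - a) <= F v - F a)
    by (apply cdf_increment_lower; try lra; intros; apply Hg; lra).
  assert (HMv : F v - F a <= M * (v - a))
    by (apply cdf_increment_upper; try lra; intros; apply Hg; lra).
  assert (Hmb : m * (b - a) <= F b - F a)
    by (apply cdf_increment_lower; try lra; intros; apply Hg; lra).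
  assert (HMb : F b - F a <= M * (b - a))
    by (apply cdf_increment_upper; try lra; intros; apply Hg; lra).
  assert (HmM : m <= M) by (apply (Rmult_le_reg_r (b - a)); lra).
  set (w := (v - a) / (b - a)).
  assert (Hw : w * (b - a) = v - a) by (unfold w; field; lra).
  assert (Hw01 : 0 <= w) by (unfold w; apply Rmult_le_pos; [|left; apply Rinv_0_lt_compat]; lra).
  assert (w * (m * (b - a)) <= w * (F b - F a)) by (apply Rmult_le_compat_l; lra).
  assert (w * (F b - F a) <= w * (M * (b - a))) by (apply Rmult_le_compat_l; lra).
  assert ((M - m) * (v - a) <= (M - m) * (b - a)) by (apply Rmult_le_compat_l; lra).
  unfold chord. fold w. apply Rabs_le. nra.
Qed.

Lemma chord_error_ratio a v b r : 0 <= a -> a <= v -> v <= b -> b <= 1 -> a < b -> 1 <= r ->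
  F b < 1 -> 0 < hazard F f a -> hazard F f b <= r * hazard F f a ->
  1 - F a <= r * (1 - F b) ->
  Rabs (chord F a b v - F v) <= (r ^ 3 - 1) * (F b - F a).
Proof.
  intros Ha Hav Hvb Hb Hab Hr HFb Hpa Hpb Hu.
  set (m := hazard F f a * (1 - F b) ^ 2). set (M := hazard F f b * (1 - F a) ^ 2).
  assert (Hm : 0 < m) by (unfold m; apply Rmult_lt_0_compat; [|apply pow_lt]; lra).
  assert (HM : M <= r ^ 3 * m).
  { unfold M, m. pose proof (cdf_mono a b ltac:(lra)).
    assert ((1 - F a) ^ 2 <= (r * (1 - F b)) ^ 2) by (apply pow_incr; lra).
    replace (r ^ 3 * (hazard F f a * (1 - F b) ^ 2))
      with (r * hazard F f a * (r * (1 - F b)) ^ 2) by ring.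
    pose proof (hazard_mono a b Ha ltac:(lra) Hb HFb).
    apply Rmult_le_compat; try lra. apply pow_le. lra. }
  assert (Hmass : m * (b - a) <= F b - F a).
  { apply cdf_increment_lower; try lra. intros t Ht.
    apply (density_hazard_bounds a b t); lra. }
  apply Rle_trans with ((M - m) * (b - a)).
  - apply (chord_error a v b m M); auto. intros t Ht. apply density_hazard_bounds; lra.
  - assert ((M - m) * (b - a) <= ((r ^ 3 - 1) * m) * (b - a)) by (apply Rmult_le_compat_r; lra).
    assert (1 <= r ^ 3) by (apply pow_R1_Rle; lra).
    assert ((r ^ 3 - 1) * (m * (b - a)) <= (r ^ 3 - 1) * (F b - F a))
      by (apply Rmult_le_compat_l; lra). lra.
Qed.

End RegularDistribution.

Lemma threshold_chain (A B : nat -> Prop) (K : nat) :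
  (forall j, (j <= K)%nat -> A j \/ B j) ->
  A 0%nat \/ B K \/ exists j, (j < K)%nat /\ B j /\ A (S j).
Proof.
  induction K as [|K IH]; intros H.
  - destruct (H 0%nat (le_n _)); tauto.
  - destruct IH as [HA | [HB | (j & Hj & HBj & HAj)]]; [intros; apply H; lia | tauto | |].
    + destruct (H (S K) (le_n _)) as [HA | HB']; [|tauto].
      right; right. exists K. auto.
    + right; right. exists j. split; [lia | auto].
Qed.

Lemma mass_gap (N : nat) (u w : R) : (1 <= N)%nat -> 0 <= w <= 1 ->
  (forall i, (i <= N)%nat -> INR i / INR N <= u \/ w < INR i / INR N) ->
  w - u <= / INR N.
Proof.
  intros HN Hw H. assert (HNpos : 0 < INR N) by (apply lt_0_INR; lia).
  destruct (threshold_chain (fun i => w < INR i / INR N) (fun i => INR i / INR N <= u) N)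
    as [H0 | [H1 | (j & _ & Hj & Hj1)]].
  - intros i Hi. destruct (H i Hi); tauto.
  - simpl in H0. unfold Rdiv in H0. lra.
  - unfold Rdiv in H1. rewrite Rinv_r in H1 by lra.
    assert (0 < / INR N) by (apply Rinv_0_lt_compat; lra). lra.
  - rewrite S_INR in Hj1. unfold Rdiv in *. lra.
Qed.

Lemma tail_gap (r u w : R) (K : nat) : 1 < r -> 0 <= w -> u < 1 - / r ^ K ->
  (forall j, (j <= K)%nat -> 1 - / r ^ j <= u \/ w < 1 - / r ^ j) ->
  1 - u < r * (1 - w).
Proof.
  intros Hr Hw Hu H.
  destruct (threshold_chain (fun j => w < 1 - / r ^ j) (fun j => 1 - / r ^ j <= u) K)
    as [H0 | [H1 | (j & _ & Hj & Hj1)]].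
  - intros j Hj. destruct (H j Hj); tauto.
  - simpl in H0. rewrite Rinv_1 in H0. lra.
  - lra.
  - assert (Hrj : 0 < r ^ j) by (apply pow_lt; lra).
    replace (r * (1 - w)) with (r * (/ r ^ S j) + r * (1 - w - / r ^ S j)) by ring.
    replace (r * / r ^ S j) with (/ r ^ j) by (simpl; field; lra).
    assert (0 < r * (1 - w - / r ^ S j)) by (apply Rmult_lt_0_compat; lra). lra.
Qed.

Lemma geometric_gap (t r u w : R) (K : nat) : 0 <= r ->
  (forall j, (j <= K)%nat -> t * r ^ j <= u \/ w < t * r ^ j) ->
  w < t \/ t * r ^ K <= u \/ w < r * u.
Proof.
  intros Hr H.
  destruct (threshold_chain (fun j => w < t * r ^ j) (fun j => t * r ^ j <= u) K)
    as [H0 | [H1 | (j & _ & Hj & Hj1)]].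
  - intros j Hj. destruct (H j Hj); tauto.
  - simpl in H0. lra.
  - tauto.
  - right; right. replace (t * r ^ S j) with (r * (t * r ^ j)) in Hj1 by (simpl; ring).
    assert (r * (t * r ^ j) <= r * u) by (apply Rmult_le_compat_l; auto). lra.
Qed.

(* The output CDF.  Knots are points (x, F x); for v in [0,1), the cell of v is
   delimited by the largest knot abscissa <= v and the smallest one > v, with
   the default knots (0,0) and (1,1). *)
Definition below_step (v : R) (best k : R * R) : R * R :=
  if Rle_dec (fst k) v then (if Rlt_dec (fst best) (fst k) then k else best) else best.
Definition above_step (v : R) (best k : R * R) : R * R :=
  if Rlt_dec v (fst k) then (if Rlt_dec (fst k) (fst best) then k else best) else best.

Definition knot_below (v : R) (L : list (R * R)) : R * R := fold_left (below_step v) L (0, 0).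
Definition knot_above (v : R) (L : list (R * R)) : R * R := fold_left (above_step v) L (1, 1).

Definition interp (a b : R * R) (v : R) : R :=
  snd a + (v - fst a) / (fst b - fst a) * (snd b - snd a).

Definition pl_cdf (L : list (R * R)) (v : R) : R :=
  if Rlt_dec v 0 then 0 else if Rle_dec 1 v then 1
  else interp (knot_below v L) (knot_above v L) v.

Lemma fold_left_ext_in {A B : Type} (h1 h2 : A -> B -> A) (L : list B) (a : A) :
  (forall c x, In x L -> h1 c x = h2 c x) -> fold_left h1 L a = fold_left h2 L a.
Proof.
  revert a. induction L as [|x L IH]; intros a H; simpl; auto.
  rewrite H by (left; auto). apply IH. intros; apply H; right; auto.
Qed.

Lemma below_step_cases v c p :
  (below_step v c p = p /\ fst p <= v /\ fst c < fst p) \/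
  (below_step v c p = c /\ (fst p <= v -> fst p <= fst c)).
Proof.
  unfold below_step. destruct (Rle_dec (fst p) v); [destruct (Rlt_dec (fst c) (fst p))|];
    [left | right | right]; repeat split; auto; lra.
Qed.

Lemma above_step_cases v c p :
  (above_step v c p = p /\ v < fst p /\ fst p < fst c) \/
  (above_step v c p = c /\ (v < fst p -> fst c <= fst p)).
Proof.
  unfold above_step. destruct (Rlt_dec v (fst p)); [destruct (Rlt_dec (fst p) (fst c))|];
    [left | right | right]; repeat split; auto; lra.
Qed.

Lemma below_fold v L c : fst c <= v ->
  let k := fold_left (below_step v) L c in
  (k = c \/ In k L) /\ fst c <= fst k <= v /\
  forall p, In p L -> fst p <= v -> fst p <= fst k.
Proof.
  revert c. induction L as [|p L IH]; intros c Hc; simpl.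
  - repeat split; auto; try lra. intros; contradiction.
  - destruct (below_step_cases v c p) as [(-> & Hpv & Hcp) | (-> & Hp)].
    + destruct (IH p Hpv) as ([E|E] & H2 & H3); repeat split; try lra; auto;
        intros q [<-|Hq] Hqv; auto; lra.
    + destruct (IH c Hc) as ([E|E] & H2 & H3); repeat split; try lra; auto;
        intros q [<-|Hq] Hqv; auto; specialize (Hp Hqv); lra.
Qed.

Lemma above_fold v L c : v < fst c ->
  let k := fold_left (above_step v) L c in
  (k = c \/ In k L) /\ v < fst k <= fst c /\
  forall p, In p L -> v < fst p -> fst k <= fst p.
Proof.
  revert c. induction L as [|p L IH]; intros c Hc; simpl.
  - repeat split; auto; try lra. intros; contradiction.
  - destruct (above_step_cases v c p) as [(-> & Hpv & Hcp) | (-> & Hp)].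
    + destruct (IH p Hpv) as ([E|E] & H2 & H3); repeat split; try lra; auto;
        intros q [<-|Hq] Hqv; auto; lra.
    + destruct (IH c Hc) as ([E|E] & H2 & H3); repeat split; try lra; auto;
        intros q [<-|Hq] Hqv; auto; specialize (Hp Hqv); lra.
Qed.

Definition knots_on (F : R -> R) (L : list (R * R)) : Prop :=
  forall p, In p L -> 0 <= fst p <= 1 /\ snd p = F (fst p).

Lemma cell_stable L v w : v < 1 -> v <= w -> w < fst (knot_above v L) ->
  knot_below w L = knot_below v L /\ knot_above w L = knot_above v L.
Proof.
  intros Hv Hvw Hw.
  destruct (above_fold v L (1, 1)) as (_ & _ & Hmin); [simpl; lra|].
  fold (knot_above v L) in Hmin.
  split; apply fold_left_ext_in; intros c p Hp.
  - unfold below_step.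
    destruct (Rle_dec (fst p) w) as [Hwp|Hwp], (Rle_dec (fst p) v) as [Hvp|Hvp]; auto;
      try (specialize (Hmin p Hp ltac:(lra))); lra.
  - unfold above_step.
    destruct (Rlt_dec w (fst p)) as [Hwp|Hwp], (Rlt_dec v (fst p)) as [Hvp|Hvp]; auto;
      try (specialize (Hmin p Hp Hvp)); lra.
Qed.

Section PiecewiseLinear.
Variables (F : R -> R) (L : list (R * R)).
Hypothesis HL : knots_on F L.
Hypothesis HF0 : F 0 = 0.
Hypothesis HF1 : F 1 = 1.
Hypothesis HFmono : forall x y, x <= y -> F x <= F y.

Lemma cell_of v : 0 <= v < 1 ->
  let a := fst (knot_below v L) in let b := fst (knot_above v L) in
  0 <= a <= v /\ v < b <= 1 /\ snd (knot_below v L) = F a /\ snd (knot_above v L) = F b /\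
  (forall p, In p L -> fst p <= v -> fst p <= a) /\
  (forall p, In p L -> v < fst p -> b <= fst p).
Proof.
  intros Hv a b.
  destruct (below_fold v L (0, 0)) as (A1 & A2 & A3); [simpl; lra|].
  destruct (above_fold v L (1, 1)) as (B1 & B2 & B3); [simpl; lra|].
  fold (knot_below v L) a in A1, A2, A3. fold (knot_above v L) b in B1, B2, B3.
  simpl in A2, B2.
  assert (Ea : snd (knot_below v L) = F a).
  { destruct A1 as [E | A1]; [unfold a; rewrite E; simpl; auto | apply HL in A1; tauto]. }
  assert (Eb : snd (knot_above v L) = F b).
  { destruct B1 as [E | B1]; [unfold b; rewrite E; simpl; auto | apply HL in B1; tauto]. }
  repeat split; auto; lra.
Qed.

Lemma pl_cdf_cell v : 0 <= v < 1 ->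
  pl_cdf L v = chord F (fst (knot_below v L)) (fst (knot_above v L)) v.
Proof.
  intros Hv. destruct (cell_of v Hv) as (_ & _ & Ea & Eb & _).
  unfold pl_cdf. destruct (Rlt_dec v 0); [lra|]. destruct (Rle_dec 1 v); [lra|].
  unfold interp, chord. rewrite Ea, Eb. reflexivity.
Qed.

Lemma pl_cdf_between v : 0 <= v < 1 ->
  F (fst (knot_below v L)) <= pl_cdf L v <= F (fst (knot_above v L)).
Proof.
  intros Hv. destruct (cell_of v Hv) as (Ha & Hb & _).
  rewrite pl_cdf_cell by auto. apply chord_between; try lra. apply HFmono. lra.
Qed.

Lemma pl_cdf_range v : 0 <= pl_cdf L v <= 1.
Proof.
  destruct (Rlt_dec v 0); [unfold pl_cdf; destruct (Rlt_dec v 0); lra|].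
  destruct (Rle_dec 1 v).
  { unfold pl_cdf. destruct (Rlt_dec v 0); [lra|]. destruct (Rle_dec 1 v); lra. }
  destruct (cell_of v ltac:(lra)) as (Ha & Hb & _). pose proof (pl_cdf_between v ltac:(lra)).
  pose proof (HFmono 0 (fst (knot_below v L)) ltac:(lra)).
  pose proof (HFmono (fst (knot_above v L)) 1 ltac:(lra)). lra.
Qed.

(* Monotonicity: within a cell the chord is nondecreasing, and across cells
   the output values are separated by the value of F at a knot. *)
Lemma pl_cdf_mono v w : v <= w -> pl_cdf L v <= pl_cdf L w.
Proof.
  intros Hvw.
  destruct (Rlt_dec v 0).
  { replace (pl_cdf L v) with 0 by (unfold pl_cdf; destruct (Rlt_dec v 0); lra).
    apply pl_cdf_range. }
  destruct (Rle_dec 1 w).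
  { replace (pl_cdf L w) with 1 by (unfold pl_cdf; destruct (Rlt_dec w 0); [lra|];
      destruct (Rle_dec 1 w); lra). apply pl_cdf_range. }
  destruct (cell_of v ltac:(lra)) as (Ha & Hb & _ & _ & _ & _).
  destruct (cell_of w ltac:(lra)) as (_ & _ & _ & _ & Hmax & _).
  destruct (Rle_dec (fst (knot_above v L)) w) as [Hbw | Hbw].
  - (* w lies beyond the cell of v: compare through the knot above v *)
    pose proof (pl_cdf_between v ltac:(lra)). pose proof (pl_cdf_between w ltac:(lra)).
    destruct (above_fold v L (1, 1)) as ([E|E] & _); [simpl; lra| |].
    + fold (knot_above v L) in E. rewrite E in Hbw. simpl in Hbw. lra.
    + fold (knot_above v L) in E. pose proof (HFmono _ _ (Hmax _ E Hbw)). lra.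
  - destruct (cell_stable L v w ltac:(lra) Hvw ltac:(lra)) as [E1 E2].
    rewrite !pl_cdf_cell, E1, E2 by lra. apply chord_mono; auto; try lra. apply HFmono; lra.
Qed.

Lemma right_continuous_of_local (G A : R -> R) (x d : R) : 0 < d ->
  (forall y, x <= y < x + d -> G y = A y) -> continuous A x ->
  filterlim G (at_right x) (locally (G x)).
Proof.
  intros Hd Hloc HA. rewrite (Hloc x) by lra.
  apply (filterlim_ext_loc A).
  - exists (mkposreal d Hd). intros y Hy Hxy. simpl in Hy.
    unfold ball in Hy; simpl in Hy. unfold AbsRing_ball, abs, minus, plus, opp in Hy; simpl in Hy.
    apply Rabs_def2 in Hy. symmetry. apply Hloc. lra.
  - apply (filterlim_filter_le_1 (F := locally x)); [apply filter_le_within | exact HA].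
Qed.

Lemma pl_cdf_is_cdf : is_cdf (pl_cdf L).
Proof.
  split; [exact pl_cdf_mono | split; [|split]].
  - intros x. destruct (Rlt_dec x 0); [|destruct (Rle_dec 1 x)].
    + apply (right_continuous_of_local _ (fun _ => 0) x (- x)); [lra| |apply continuous_const].
      intros y Hy. unfold pl_cdf. destruct (Rlt_dec y 0); lra.
    + apply (right_continuous_of_local _ (fun _ => 1) x 1); [lra| |apply continuous_const].
      intros y Hy. unfold pl_cdf. destruct (Rlt_dec y 0); [lra|]. destruct (Rle_dec 1 y); lra.
    + destruct (cell_of x ltac:(lra)) as (Ha & Hb & _).
      set (a := fst (knot_below x L)) in *. set (b := fst (knot_above x L)) in *.
      apply (right_continuous_of_local _ (chord F a b) x (b - x)); [lra| |].
      * intros y Hy.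
        destruct (cell_stable L x y ltac:(lra) ltac:(lra) ltac:(fold b; lra)) as [E1 E2].
        rewrite pl_cdf_cell, E1, E2 by lra. reflexivity.
      * apply (@ex_derive_continuous R_AbsRing R_NormedModule). unfold chord. auto_derive. lra.
  - apply is_lim_ext_loc with (fun _ => 0); [|apply is_lim_const].
    exists 0. intros y Hy. unfold pl_cdf. destruct (Rlt_dec y 0); lra.
  - apply is_lim_ext_loc with (fun _ => 1); [|apply is_lim_const].
    exists 1. intros y Hy. unfold pl_cdf.
    destruct (Rlt_dec y 0); [lra|]. destruct (Rle_dec 1 y); lra.
Qed.

End PiecewiseLinear.

Notation entry := (R * R * R)%type.

Definition obs (F f : R -> R) (x : R) : entry := (x, F x, f x).
Definition abscissa (e : entry) : R := fst (fst e).
Definition cdf_value (e : entry) : R := snd (fst e).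

Definition bisect_step (p : entry -> bool) (lr : R * R) (e : entry) : R * R :=
  if p e then (fst lr, abscissa e) else (abscissa e, snd lr).
Definition bracket (p : entry -> bool) (h : list entry) : R * R :=
  fold_left (bisect_step p) h (0, 1).

(* Queries are grouped in blocks of B: block j bisects test j, starting from
   [0,1] and using only the answers of its own block. *)
Definition bisection_query (tests : list (entry -> bool)) (B : nat) (h : list entry) : R :=
  let j := Nat.div (length h) B in
  let lr := bracket (nth j tests (fun _ => true)) (skipn (j * B) h) in
  (fst lr + snd lr) / 2.

Lemma transcript_length q F f n : length (transcript q F f n) = n.
Proof. induction n; simpl; auto. rewrite length_app, IHn. simpl. lia. Qed.

Lemma transcript_obs q F f n e : In e (transcript q F f n) -> e = obs F f (abscissa e).
Proof.
  induction n; simpl; [tauto|]. intros H. apply in_app_or in H.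
  destruct H as [H | [<- | []]]; auto.
Qed.

Lemma transcript_grows q F f m n e : (m <= n)%nat ->
  In e (transcript q F f m) -> In e (transcript q F f n).
Proof.
  intros Hmn He. induction Hmn; auto. simpl. apply in_or_app. auto.
Qed.

Definition bracket_inv (F f : R -> R) (p : entry -> bool) (h : list entry) (k : nat)
  (lr : R * R) : Prop :=
  0 <= fst lr /\ snd lr <= 1 /\ snd lr - fst lr = / 2 ^ k /\
  (fst lr = 0 \/ (In (obs F f (fst lr)) h /\ p (obs F f (fst lr)) = false)) /\
  (snd lr = 1 \/ (In (obs F f (snd lr)) h /\ p (obs F f (snd lr)) = true)).

Lemma bisection_invariant tests B F f j k : (0 < B)%nat -> (k <= B)%nat ->
  let p := nth j tests (fun _ => true) in
  let h := transcript (bisection_query tests B) F f (j * B + k) in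
  bracket_inv F f p h k (bracket p (skipn (j * B) h)).
Proof.
  intros HB. induction k as [|k IH]; intros Hk p h.
  - subst h. rewrite Nat.add_0_r, skipn_all2 by (rewrite transcript_length; lia).
    unfold bracket_inv, bracket; simpl. repeat split; auto; lra.
  - specialize (IH ltac:(lia)). simpl in IH. fold p in IH.
    subst h. rewrite Nat.add_succ_r. simpl.
    set (h0 := transcript (bisection_query tests B) F f (j * B + k)) in *.
    assert (Hj : Nat.div (length h0) B = j).
    { unfold h0. rewrite transcript_length, Nat.div_add_l, Nat.div_small by lia. lia. }
    rewrite skipn_app. replace (j * B - length h0)%nat with O
      by (unfold h0; rewrite transcript_length; lia).
    unfold bracket at 1. rewrite fold_left_app. simpl. fold (bracket p (skipn (j * B) h0)).
    unfold bisection_query. cbv zeta. rewrite Hj. fold p.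
    destruct (bracket p (skipn (j * B) h0)) as [l r]. simpl.
    set (x := (l + r) / 2).
    destruct IH as (H1 & H2 & H3 & H4 & H5); simpl in *.
    assert (Hhalf : / (2 * 2 ^ k) = / 2 ^ k / 2) by (field; apply pow_nonzero; lra).
    assert (Hpos : 0 < / 2 ^ k) by (apply Rinv_0_lt_compat; apply pow_lt; lra).
    assert (Hxl : x - l = / 2 ^ k / 2) by (unfold x; lra).
    assert (Hxr : r - x = / 2 ^ k / 2) by (unfold x; lra).
    assert (Hnew : In (obs F f x) (h0 ++ obs F f x :: nil)) by (apply in_or_app; right; left; auto).
    unfold bisect_step, bracket_inv; fold (obs F f x).
    destruct (p (obs F f x)) eqn:Ep; simpl; unfold abscissa; simpl; rewrite Hhalf.
    + repeat split; try lra; [|right; auto].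
      destruct H4 as [H4 | [H4 H4']]; [left | right; split]; auto. apply in_or_app; auto.
    + repeat split; try lra; [right; auto|].
      destruct H5 as [H5 | [H5 H5']]; [left | right; split]; auto. apply in_or_app; auto.
Qed.

Lemma bisection_result tests B F f p : (0 < B)%nat -> In p tests ->
  let h := transcript (bisection_query tests B) F f (length tests * B) in
  exists l r, 0 <= l /\ r <= 1 /\ r - l = / 2 ^ B /\
    (l = 0 \/ (In (obs F f l) h /\ p (obs F f l) = false)) /\
    (r = 1 \/ (In (obs F f r) h /\ p (obs F f r) = true)).
Proof.
  intros HB Hin h. destruct (In_nth tests p (fun _ => true) Hin) as [j [Hj Hnth]].
  pose proof (bisection_invariant tests B F f j B HB (le_n _)) as Hinv. simpl in Hinv.
  rewrite Hnth in Hinv.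
  destruct (bracket p _) as [l r]. destruct Hinv as (H1 & H2 & H3 & H4 & H5); simpl in *.
  assert (Hgrow : forall e, In e (transcript (bisection_query tests B) F f (j * B + B)) -> In e h)
    by (intros; eapply transcript_grows; [|eauto]; nia).
  exists l, r. repeat split; auto.
  - destruct H4 as [H4 | [H4 H4']]; [left | right; split]; auto.
  - destruct H5 as [H5 | [H5 H5']]; [left | right; split]; auto.
Qed.

Definition in_unit (e : entry) : bool :=
  if Rle_dec 0 (abscissa e) then if Rle_dec (abscissa e) 1 then true else false else false.

Definition knots_of (h : list entry) : list (R * R) :=
  (0, 0) :: (1, 1) :: map (fun e => (abscissa e, cdf_value e)) (filter in_unit h).

Lemma knots_of_transcript F f q n : F 0 = 0 -> F 1 = 1 ->
  knots_on F (knots_of (transcript q F f n)).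
Proof.
  intros H0 H1 p [<- | [<- | Hp]]; simpl; [split; [lra | auto] .. |].
  apply in_map_iff in Hp. destruct Hp as [e [<- He]]. apply filter_In in He.
  destruct He as [He Hu]. unfold in_unit in Hu.
  destruct (Rle_dec 0 (abscissa e)) as [Hx0|]; [|discriminate].
  destruct (Rle_dec (abscissa e) 1) as [Hx1|]; [|discriminate].
  rewrite (transcript_obs q F f n e He). split; [exact (conj Hx0 Hx1) | reflexivity].
Qed.

Lemma knot_of_query F f h x : 0 <= x <= 1 -> In (obs F f x) h -> In (x, F x) (knots_of h).
Proof.
  intros Hx He. right; right. apply in_map_iff. exists (obs F f x). split; auto.
  apply filter_In. split; auto. unfold in_unit, abscissa; simpl.
  destruct (Rle_dec 0 x); [|lra]. destruct (Rle_dec x 1); [auto | lra].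
Qed.

Definition monotone_test (F f : R -> R) (p : entry -> bool) : Prop :=
  forall x y, 0 <= x -> x <= y -> y <= 1 -> p (obs F f x) = true -> p (obs F f y) = true.

Lemma cell_unseparated tests B F f p v : (0 < B)%nat -> In p tests -> monotone_test F f p ->
  F 0 = 0 -> F 1 = 1 -> (forall x y, x <= y -> F x <= F y) -> 0 <= v < 1 ->
  let L := knots_of (transcript (bisection_query tests B) F f (length tests * B)) in
  let a := fst (knot_below v L) in let b := fst (knot_above v L) in
  / 2 ^ B < b - a -> p (obs F f a) = p (obs F f b).
Proof.
  intros HB Hin Hp H0 H1 Hm Hv L a b Hwide.
  destruct (bisection_result tests B F f p HB Hin) as (l & r & Hl & Hr & Hlr & Hleft & Hright).
  assert (HL : knots_on F L) by (apply knots_of_transcript; auto).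
  assert (Hpos : 0 < / 2 ^ B) by (apply Rinv_0_lt_compat; apply pow_lt; lra).
  destruct (cell_of F L HL H0 H1 v Hv)
    as (Ha & Hb & _ & _ & Hbelow & Habove).
  fold a b in Ha, Hb, Hbelow, Habove.
  assert (Hl_knot : In (l, F l) L).
  { destruct Hleft as [-> | [Hq _]]; [rewrite H0; left; auto|].
    apply (knot_of_query F f); auto; lra. }
  assert (Hr_knot : In (r, F r) L).
  { destruct Hright as [-> | [Hq _]]; [rewrite H1; right; left; auto|].
    apply (knot_of_query F f); auto; lra. }
  destruct (Rle_dec r v) as [Hrv | Hrv]; [|destruct (Rlt_dec v l) as [Hvl | Hvl]].
  - (* the test already passes at a queried point left of the cell *)
    assert (Hra : r <= a) by (apply (Hbelow _ Hr_knot); simpl; auto).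
    destruct Hright as [E | [_ Hpr]]; [lra|].
    assert (Hpa : p (obs F f a) = true) by (apply (Hp r); auto; lra).
    rewrite Hpa. symmetry. apply (Hp a); auto; lra.
  - (* the test still fails at a queried point right of the cell *)
    assert (Hbl : b <= l) by (apply (Habove _ Hl_knot); simpl; auto).
    destruct Hleft as [E | [_ Hpl]]; [lra|].
    assert (Hpb : p (obs F f b) = false).
    { destruct (p (obs F f b)) eqn:E; auto. rewrite <- Hpl. symmetry. apply (Hp b); auto; lra. }
    rewrite Hpb. destruct (p (obs F f a)) eqn:E; auto.
    rewrite <- Hpb. symmetry. apply (Hp a); auto; lra.
  - (* otherwise the cell would lie inside the final bracket *)
    assert (l <= a) by (apply (Hbelow _ Hl_knot); simpl; lra).
    assert (b <= r) by (apply (Habove _ Hr_knot); simpl; lra). lra.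
Qed.

(* The ratio r = 1 + 1/N by which quantities may vary on an unseparated cell. *)
Definition ratio (N : nat) : R := 1 + / INR N.

Lemma ratio_bounds N : (1 <= N)%nat -> 1 < ratio N <= 2.
Proof.
  intros HN. assert (H1 : 1 <= INR N) by (apply (le_INR 1); auto).
  unfold ratio. pose proof (Rinv_0_lt_compat (INR N) ltac:(lra)).
  pose proof (Rinv_le_contravar 1 (INR N) ltac:(lra) H1). rewrite Rinv_1 in *. lra.
Qed.

(* (1 + 1/N)^N >= 2, hence (1 + 1/N)^(N k) >= 2^k. *)
Lemma ratio_pow N k : (1 <= N)%nat -> 2 ^ k <= ratio N ^ (N * k).
Proof.
  intros HN. assert (HNpos : 0 < INR N) by (apply lt_0_INR; lia).
  rewrite pow_mult. apply pow_incr. split; [lra|].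
  pose proof (poly N (/ INR N) (Rinv_0_lt_compat _ HNpos)) as Hb.
  unfold ratio. rewrite Rinv_r in Hb by lra. lra.
Qed.

Lemma ratio_cube N : (1 <= N)%nat -> ratio N ^ 3 - 1 <= 7 * / INR N.
Proof.
  intros HN. assert (HNpos : 0 < INR N) by (apply lt_0_INR; lia).
  assert (0 < / INR N <= 1).
  { split; [apply Rinv_0_lt_compat; lra|].
    rewrite <- Rinv_1. apply Rinv_le_contravar; [lra | apply (le_INR 1); auto]. }
  unfold ratio. set (d := / INR N) in *. simpl. nra.
Qed.

Lemma relative_error_bound N eps d : (1 <= N)%nat -> 1 <= INR N * INR N * eps ->
  0 <= d <= / INR N -> (ratio N ^ 3 - 1) * d <= 7 * eps.
Proof.
  intros HN HNe Hd. assert (HNpos : 0 < INR N) by (apply lt_0_INR; lia).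
  pose proof (ratio_cube N HN). pose proof (ratio_bounds N HN).
  assert (1 <= ratio N ^ 3) by (apply pow_R1_Rle; lra).
  apply Rle_trans with (7 * / INR N * / INR N); [apply Rmult_le_compat; lra|].
  rewrite Rmult_assoc, <- Rinv_mult. apply Rmult_le_compat_l; [lra|].
  apply (Rmult_le_reg_l (INR N * INR N)); [nra|]. rewrite Rinv_r by nra. lra.
Qed.

Definition above (t : R) (e : entry) : bool :=
  if Rle_dec t (cdf_value e) then true else false.

Definition hazard_above (eps t : R) (e : entry) : bool :=
  if Rle_dec (1 - eps) (cdf_value e) then true
  else if Rle_dec t (snd e / (1 - cdf_value e) ^ 2) then true else false.

Lemma above_monotone F f t : (forall x y, x <= y -> F x <= F y) -> monotone_test F f (above t).
Proof.
  intros Hm x y _ Hxy _. unfold above, cdf_value; simpl.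
  destruct (Rle_dec t (F x)); [|discriminate]. pose proof (Hm x y Hxy).
  destruct (Rle_dec t (F y)); [auto | lra].
Qed.

Lemma above_unseparated F f t a b : above t (obs F f a) = above t (obs F f b) ->
  t <= F a \/ F b < t.
Proof.
  unfold above, cdf_value; simpl. destruct (Rle_dec t (F a)), (Rle_dec t (F b));
    try discriminate; intros _; lra.
Qed.

Lemma hazard_above_unseparated F f eps t a b : F a < 1 - eps ->
  hazard_above eps t (obs F f a) = hazard_above eps t (obs F f b) ->
  t <= hazard F f a \/ hazard F f b < t.
Proof.
  intros Ha Hs. unfold hazard_above, hazard, cdf_value in *; cbn [fst snd obs] in *.
  destruct (Rle_dec (1 - eps) (F a)); [lra|].
  destruct (Rle_dec t (f a / (1 - F a) ^ 2)) as [Hta|Hta]; [left; auto|].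
  destruct (Rle_dec (1 - eps) (F b)); [discriminate|].
  destruct (Rle_dec t (f b / (1 - F b) ^ 2)); [discriminate | lra].
Qed.



Lemma hazard_above_monotone F f g g' eps t : regular_density F f g g' -> 0 <= eps ->
  monotone_test F f (hazard_above eps t).
Proof.
  intros HF Heps x y Hx Hxy Hy. unfold hazard_above, cdf_value; cbn [fst snd obs].
  pose proof (cdf_mono _ _ _ _ HF x y Hxy).
  destruct (Rle_dec (1 - eps) (F y)); auto.
  destruct (Rle_dec (1 - eps) (F x)); [lra|].
  destruct (Rle_dec t (f x / (1 - F x) ^ 2)) as [Htx|]; [|discriminate]. intros _.
  pose proof (hazard_mono F f g g' HF x y Hx Hxy Hy ltac:(lra)). unfold hazard in *.
  destruct (Rle_dec t (f y / (1 - F y) ^ 2)); [auto | lra].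
Qed.

(* The tests bisected by the algorithm:
   - F(x) >= i/N for i <= N (the cell carries mass at most 1/N);
   - F(x) >= 1 - r^-j for j <= N B, r = 1 + 1/N (1 - F varies by a factor <= r);
   - the hazard ratio is >= eps r^j (it varies by a factor <= r). *)
Definition tests (eps : R) (N B : nat) : list (entry -> bool) :=
  map (fun i => above (INR i / INR N)) (seq 0 (S N)) ++
  map (fun j => above (1 - / ratio N ^ j)) (seq 0 (S (N * B))) ++
  map (fun j => hazard_above eps (eps * ratio N ^ j)) (seq 0 (S (N * (4 * B + 2)))).

Lemma mass_test_in eps N B i : (i <= N)%nat -> In (above (INR i / INR N)) (tests eps N B).
Proof.
  intros Hi. unfold tests. rewrite !in_app_iff. left.
  apply in_map_iff. exists i. split; [reflexivity | apply in_seq; lia].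
Qed.

Lemma tail_test_in eps N B j : (j <= N * B)%nat ->
  In (above (1 - / ratio N ^ j)) (tests eps N B).
Proof.
  intros Hj. unfold tests. rewrite !in_app_iff. right; left.
  apply in_map_iff. exists j. split; [reflexivity | apply in_seq; lia].
Qed.

Lemma hazard_test_in eps N B j : (j <= N * (4 * B + 2))%nat ->
  In (hazard_above eps (eps * ratio N ^ j)) (tests eps N B).
Proof.
  intros Hj. unfold tests. rewrite !in_app_iff. right; right.
  apply in_map_iff. exists j. split; [reflexivity | apply in_seq; lia].
Qed.

(* N is about eps^(-1/2) and B about log2(1/eps). *)
Record params (eps : R) (N B : nat) : Prop := {
  eps_range : 0 < eps < 1;
  N_pos : (1 <= N)%nat;
  N_large : 1 <= INR N * INR N * eps;
  B_large : 1 <= 2 ^ B * eps }.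

Definition unseparated (ts : list (entry -> bool)) (F f : R -> R) (a b : R) : Prop :=
  forall p, In p ts -> p (obs F f a) = p (obs F f b).

Lemma params_B_pos eps N B : params eps N B -> (0 < B)%nat.
Proof.
  intros [Heps _ _ HB]. destruct B; [simpl in HB; lra | lia].
Qed.

Lemma params_resolution eps N B : params eps N B -> / 2 ^ B <= eps.
Proof.
  intros [Heps _ _ HB]. assert (0 < 2 ^ B) by (apply pow_lt; lra).
  apply (Rmult_le_reg_l (2 ^ B)); auto. rewrite Rinv_r; lra.
Qed.

Section CellAccuracy.
Variables F f g g' : R -> R.
Hypothesis HF : regular_density F f g g'.
Variables (eps : R) (N B : nat).
Hypothesis HP : params eps N B.

Lemma tests_monotone p : In p (tests eps N B) -> monotone_test F f p.
Proof.
  pose proof (eps_range _ _ _ HP).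
  unfold tests. rewrite !in_app_iff, !in_map_iff.
  intros [(i & <- & _) | [(j & <- & _) | (j & <- & _)]];
    [apply above_monotone, (cdf_mono _ _ _ _ HF) ..
    | apply (hazard_above_monotone F f g g'); auto; lra].
Qed.

Lemma cell_mass a b : unseparated (tests eps N B) F f a b -> F b - F a <= / INR N.
Proof.
  intros Hu. apply (mass_gap N); [apply (N_pos _ _ _ HP) | apply (cdf_range _ _ _ _ HF) |].
  intros i Hi. apply (above_unseparated F f). apply Hu. apply mass_test_in. exact Hi.
Qed.

Lemma cell_tail a b : F a < 1 - eps -> unseparated (tests eps N B) F f a b ->
  1 - F a < ratio N * (1 - F b).
Proof.
  intros Ha Hu. pose proof (ratio_bounds N (N_pos _ _ _ HP)).
  apply (tail_gap _ _ _ (N * B)); [lra | apply (cdf_range _ _ _ _ HF) | |].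
  - (* r^(N B) >= 2^B >= 1/eps *)
    pose proof (ratio_pow N B (N_pos _ _ _ HP)). pose proof (params_resolution _ _ _ HP).
    assert (/ ratio N ^ (N * B) <= / 2 ^ B) by (apply Rinv_le_contravar; [apply pow_lt|]; lra).
    lra.
  - intros j Hj. apply (above_unseparated F f). apply Hu. apply tail_test_in. exact Hj.
Qed.

(* The hazard ratio cannot be huge on a cell that is wider than eps and far
   from the upper tail: the cell would carry mass larger than 1. *)
Lemma cell_hazard_bounded a b : 0 <= a -> a < b -> b <= 1 -> eps < b - a ->
  eps / 2 < 1 - F b -> hazard F f a < eps * ratio N ^ (N * (4 * B + 2)).
Proof.
  intros Ha Hab Hb Hwide Htail. pose proof (eps_range _ _ _ HP) as Heps.
  destruct (Rlt_le_dec (hazard F f a) (eps * ratio N ^ (N * (4 * B + 2)))) as [|Hbig]; auto.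
  exfalso.
  assert (Hmass : hazard F f a * (1 - F b) ^ 2 * (b - a) <= F b - F a).
  { apply (cdf_increment_lower F f g g' HF); try lra. intros t Ht.
    apply (density_hazard_bounds F f g g' HF a b t); lra. }
  pose proof (ratio_pow N (4 * B + 2) (N_pos _ _ _ HP)) as Hr.
  replace (2 ^ (4 * B + 2)) with (4 * (2 ^ B) ^ 4) in Hr
    by (rewrite (Nat.mul_comm 4 B), pow_add, pow_mult; simpl; ring).
  assert (H2B : 1 <= (2 ^ B * eps) ^ 4)
    by (replace 1 with (1 ^ 4) by ring; apply pow_incr; pose proof (B_large _ _ _ HP); lra).
  assert (Htail2 : (eps / 2) ^ 2 <= (1 - F b) ^ 2) by (apply pow_incr; lra).
  assert (Hbig' : eps * (4 * (2 ^ B) ^ 4) <= hazard F f a)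
    by (pose proof (Rmult_le_compat_l eps _ _ ltac:(lra) Hr); lra).
  set (c := eps * (4 * (2 ^ B) ^ 4) * (eps / 2) ^ 2).
  assert (Hc : 0 < c).
  { unfold c. pose proof (pow_lt (2 ^ B) 4 ltac:(apply pow_lt; lra)).
    pose proof (pow_lt (eps / 2) 2 ltac:(lra)). apply Rmult_lt_0_compat; nra. }
  assert (Hc' : c <= hazard F f a * (1 - F b) ^ 2)
    by (apply Rmult_le_compat; try lra; [pose proof (pow_lt (2 ^ B) 4 ltac:(apply pow_lt; lra)); nra
                                        | apply pow_le; lra]).
  assert (Hprod : c * eps < hazard F f a * (1 - F b) ^ 2 * (b - a)).
  { apply Rlt_le_trans with (c * (b - a)); [apply Rmult_lt_compat_l; lra|].
    apply Rmult_le_compat_r; lra. }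
  unfold c in Hprod.
  replace (eps * (4 * (2 ^ B) ^ 4) * (eps / 2) ^ 2 * eps) with ((2 ^ B * eps) ^ 4) in Hprod
    by field.
  pose proof (cdf_range _ _ _ _ HF a). pose proof (cdf_range _ _ _ _ HF b). lra.
Qed.

Lemma cell_accuracy a v b : 0 <= a -> a <= v -> v < b -> b <= 1 -> eps < b - a ->
  F a < 1 - eps -> unseparated (tests eps N B) F f a b ->
  F b - F a <= eps \/ Rabs (chord F a b v - F v) <= 7 * eps.
Proof.
  intros Ha Hav Hvb Hb Hwide Hfar Hu.
  pose proof (eps_range _ _ _ HP) as Heps. pose proof (N_pos _ _ _ HP) as HN.
  pose proof (ratio_bounds N HN) as Hr.
  pose proof (cell_mass a b Hu) as Hmass.
  pose proof (cell_tail a b Hfar Hu) as Htail.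
  assert (Htail' : eps / 2 < 1 - F b) by nra.
  assert (Hhaz0 : 0 <= hazard F f b).
  { unfold hazard. apply Rmult_le_pos; [apply (density_nonneg _ _ _ _ HF)|].
    left. apply Rinv_0_lt_compat. apply pow_lt. lra. }
  destruct (geometric_gap eps (ratio N) (hazard F f a) (hazard F f b) (N * (4 * B + 2)))
    as [Hsmall | [Hbig | Hclose]]; [lra | | | |].
  - intros j Hj. apply (hazard_above_unseparated F f eps); auto.
    apply Hu. apply hazard_test_in. exact Hj.
  - (* small hazard ratio: the density is below eps on the cell *)
    left. assert (F b - F a <= eps * (b - a)).
    { apply (cdf_increment_upper F f g g' HF); try lra. intros t Ht.
      pose proof (density_hazard_bounds F f g g' HF a b t Ha ltac:(lra) ltac:(lra) Hb ltac:(lra)).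
      pose proof (cdf_range _ _ _ _ HF a).
      assert ((1 - F a) ^ 2 <= 1) by nra.
      assert (hazard F f b * (1 - F a) ^ 2 <= hazard F f b) by nra. lra. }
    nra.
  - pose proof (cell_hazard_bounded a b Ha ltac:(lra) Hb Hwide Htail'). lra.
  - (* both 1 - F and the hazard ratio are within a factor ratio N on the cell *)
    right. assert (Hpa : 0 < hazard F f a) by nra.
    apply Rle_trans with ((ratio N ^ 3 - 1) * (F b - F a)).
    + apply (chord_error_ratio F f g g' HF); lra.
    + apply (relative_error_bound N); [exact HN | exact (N_large _ _ _ HP) |].
      pose proof (cdf_mono _ _ _ _ HF a b ltac:(lra)). lra.
Qed.

End CellAccuracy.

Lemma levy_on_cell (F : R -> R) a b v G e : (forall x y, x <= y -> F x <= F y) ->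
  (forall x, F x <= 1) -> a <= v < b -> F a <= G <= F b -> 0 <= e ->
  (b - a <= e \/ F b - F a <= e \/ 1 - e <= F a \/ Rabs (G - F v) <= e) ->
  F (v - e) - e <= G /\ G <= F (v + e) + e.
Proof.
  intros Hm H1 Hv HG He Hc.
  pose proof (Hm (v - e) v ltac:(lra)). pose proof (Hm v (v + e) ltac:(lra)).
  pose proof (Hm a v ltac:(lra)). pose proof (Hm v b ltac:(lra)).
  destruct Hc as [Hc | [Hc | [Hc | Hc]]].
  - pose proof (Hm (v - e) a ltac:(lra)). pose proof (Hm b (v + e) ltac:(lra)). lra.
  - lra.
  - pose proof (H1 (v - e)). pose proof (H1 b). pose proof (Hm a (v + e) ltac:(lra)). lra.
  - apply Rabs_le_between in Hc. lra.
Qed.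

Definition query_count (eps : R) (N B : nat) : nat := (length (tests eps N B) * B)%nat.
Definition output (h : list entry) : R -> R := pl_cdf (knots_of h).
Definition run (eps : R) (N B : nat) (F f : R -> R) : R -> R :=
  output (transcript (bisection_query (tests eps N B) B) F f (query_count eps N B)).

Lemma run_is_cdf eps N B F f g g' : regular_density F f g g' -> is_cdf (run eps N B F f).
Proof.
  intros HF.
  pose proof (cdf_at_0 _ _ _ _ HF). pose proof (cdf_at_1 _ _ _ _ HF).
  apply (pl_cdf_is_cdf F); auto using knots_of_transcript. apply (cdf_mono _ _ _ _ HF).
Qed.

Lemma run_levy_close eps N B F f g g' e : params eps N B -> regular_density F f g g' ->
  7 * eps <= e -> levy_close F (run eps N B F f) e.
Proof.
  intros HP HF He v. pose proof (eps_range _ _ _ HP) as Heps.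
  pose proof (cdf_range _ _ _ _ HF) as Hr.
  pose proof (cdf_mono _ _ _ _ HF) as Hm.
  pose proof (cdf_at_0 _ _ _ _ HF) as H0. pose proof (cdf_at_1 _ _ _ _ HF) as H1.
  set (L := knots_of (transcript (bisection_query (tests eps N B) B) F f (query_count eps N B))).
  assert (HL : knots_on F L) by (apply knots_of_transcript; auto).
  unfold run, output. fold L.
  destruct (Rlt_dec v 0) as [Hv0 | Hv0]; [|destruct (Rle_dec 1 v) as [Hv1 | Hv1]].
  - replace (pl_cdf L v) with 0 by (unfold pl_cdf; destruct (Rlt_dec v 0); lra).
    rewrite (cdf_left _ _ _ _ HF) by lra. pose proof (Hr (v + e)). lra.
  - replace (pl_cdf L v) with 1
      by (unfold pl_cdf; destruct (Rlt_dec v 0); [lra|]; destruct (Rle_dec 1 v); lra).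
    rewrite (cdf_right _ _ _ _ HF (v + e)) by lra. pose proof (Hr (v - e)). lra.
  - destruct (cell_of F L HL H0 H1 v ltac:(lra)) as (Ha & Hb & _).
    pose proof (pl_cdf_between F L HL H0 H1 Hm v ltac:(lra)).
    rewrite (pl_cdf_cell F L HL H0 H1 v) in * by lra.
    set (a := fst (knot_below v L)) in *. set (b := fst (knot_above v L)) in *.
    apply (levy_on_cell F a b); auto; try lra; [intros x; apply Hr|].
    destruct (Rle_dec (b - a) eps); [left; lra|].
    destruct (Rle_dec (1 - eps) (F a)); [right; right; left; lra|].
    assert (Hu : unseparated (tests eps N B) F f a b).
    { intros p Hp. apply (cell_unseparated (tests eps N B) B F f p v); auto;
        [apply (params_B_pos _ _ _ HP) | apply (tests_monotone F f g g' HF eps N B HP p Hp)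
        | lra |].
      pose proof (params_resolution _ _ _ HP). change (/ 2 ^ B < b - a). lra. }
    destruct (cell_accuracy F f g g' HF eps N B HP a v b) as [Hc | Hc]; auto; lra.
Qed.

Lemma tests_length eps N B : length (tests eps N B) = (N * (5 * B + 3) + 3)%nat.
Proof. unfold tests. rewrite !length_app, !length_map, !length_seq. lia. Qed.

Lemma query_count_bound eps N B (s l : R) : 1 <= s -> 1 <= l ->
  INR N <= 2 * s -> INR B <= 2 * l -> INR (query_count eps N B) <= 58 * s * l ^ 2.
Proof.
  intros Hs Hl HN HB. unfold query_count. rewrite tests_length. repeat rewrite ?mult_INR, ?plus_INR.
  pose proof (pos_INR N). pose proof (pos_INR B).
  replace (INR 5) with 5 by (simpl; ring). replace (INR 3) with 3 by (simpl; ring).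
  assert (Hcount : INR N * (5 * INR B + 3) + 3 <= 29 * s * l).
  { assert (INR N * (5 * INR B + 3) <= 2 * s * (10 * l + 3)) by (apply Rmult_le_compat; lra).
    nra. }
  replace (58 * s * l ^ 2) with ((29 * s * l) * (2 * l)) by ring.
  apply Rmult_le_compat; nra.
Qed.

Lemma nat_ceiling_bounds x : 0 < x -> x <= INR (Z.to_nat (up x)) <= x + 1.
Proof.
  intros Hx. destruct (archimed x) as [H1 H2].
  rewrite INR_IZR_INZ, Z2Nat.id by (apply le_IZR; lra). lra.
Qed.

(* Used to compare 2^B = 4^L with exp L >= 1/eps. *)
Lemma exp_le_pow4 n : exp (INR n) <= 4 ^ n.
Proof.
  induction n as [|n IH]; [simpl; rewrite exp_0; lra|].
  rewrite S_INR, exp_plus. simpl. pose proof exp_le_3. pose proof (exp_pos (INR n)). nra.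
Qed.

Lemma choose_params eps : 0 < eps < 1 ->
  let N := Z.to_nat (up (/ sqrt eps)) in
  let B := (2 * Z.to_nat (up (ln (/ eps))))%nat in
  params eps N B /\ INR N <= 2 * / sqrt eps /\ INR B <= 2 * (1 + ln (/ eps)).
Proof.
  intros Heps N B.
  assert (Hsq : 0 < sqrt eps <= 1)
    by (split; [apply sqrt_lt_R0 | rewrite <- sqrt_1; apply sqrt_le_1_alt]; lra).
  assert (Hs : 1 <= / sqrt eps) by (rewrite <- Rinv_1; apply Rinv_le_contravar; lra).
  assert (Hl : 0 < ln (/ eps)).
  { rewrite <- ln_1. apply ln_increasing; [lra|]. rewrite <- Rinv_1. apply Rinv_lt_contravar; lra. }
  pose proof (nat_ceiling_bounds (/ sqrt eps) ltac:(lra)) as HN. fold N in HN.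
  pose proof (nat_ceiling_bounds (ln (/ eps)) Hl) as HL.
  set (L := Z.to_nat (up (ln (/ eps)))) in *.
  assert (HBL : INR B = 2 * INR L) by (unfold B; rewrite mult_INR; reflexivity).
  split; [split|]; try lra.
  - apply (INR_lt 0 N). simpl. lra.
  - assert (E : / sqrt eps * / sqrt eps * eps = 1)
      by (rewrite <- Rinv_mult, sqrt_sqrt by lra; field; lra).
    assert (/ sqrt eps * / sqrt eps <= INR N * INR N) by (apply Rmult_le_compat; lra). nra.
  - (* 2^B = 4^L >= exp L >= 1/eps *)
    assert (E2 : 2 ^ B = 4 ^ L) by (unfold B; rewrite pow_mult; f_equal; simpl; ring).
    assert (Hexp : / eps <= exp (INR L)).
    { rewrite <- (exp_ln (/ eps)) by (apply Rinv_0_lt_compat; lra).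
      destruct (Req_dec (ln (/ eps)) (INR L)) as [E|E]; [rewrite E; lra|].
      left. apply exp_increasing. lra. }
    pose proof (exp_le_pow4 L). rewrite E2.
    apply (Rmult_le_compat_r eps) in Hexp; [|lra]. rewrite Rinv_l in Hexp by lra. nra.
Qed.

Theorem theorem7 :
  exists (C : R) (k : nat), 0 < C /\
  forall eps : R, 0 < eps < 1 ->
  exists (n : nat) (query : list (R * R * R) -> R)
         (out : list (R * R * R) -> R -> R),
    INR n <= C * / sqrt eps * (1 + ln (/ eps)) ^ k /\
    forall F f : R -> R, smooth_regular01 F f ->
      is_cdf (out (transcript query F f n)) /\
      Rbar_le (levy_dist F (out (transcript query F f n))) (Finite (C * eps)).
Proof.
  exists 58, 2%nat. split; [lra|]. intros eps Heps.
  destruct (choose_params eps Heps) as (HP & HN & HB).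
  set (N := Z.to_nat (up (/ sqrt eps))) in *.
  set (B := (2 * Z.to_nat (up (ln (/ eps))))%nat) in *.
  exists (query_count eps N B), (bisection_query (tests eps N B) B), output. split.
  -
    assert (1 <= / sqrt eps).
    { rewrite <- Rinv_1. apply Rinv_le_contravar; [apply sqrt_lt_R0; lra|].
      rewrite <- sqrt_1. apply sqrt_le_1_alt. lra. }
    assert (0 <= ln (/ eps)).
    { rewrite <- ln_1. left. apply ln_increasing; [lra|].
      rewrite <- Rinv_1. apply Rinv_lt_contravar; lra. }
    apply query_count_bound; lra.
  -
    intros F f Hsr. destruct (regular_density_of F f Hsr) as (g & g' & HF).
    split; [apply (run_is_cdf eps N B F f g g' HF)|].
    destruct (Glb_Rbar_correct (levy_close F (run eps N B F f))) as [Hlower _].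
    apply Hlower. apply (run_levy_close eps N B F f g g'); auto. lra.
Qed.
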